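(* There exists a compact, countably infinite topological space $(T,\tau)$ which is not the continuous image of Cantor's ternary set $C$; that is, there is no continuous surjection $f\colon C \to T$.
   Context: Cantor's ternary set is $C = \left\{ \sum_{n \in \mathbb{N}} \frac{\omega_n}{3^n} : \omega_n \in \{0,2\} \text{ for all } n \in \mathbb{N}\right\}$, equipped with the subspace topology induced by the Euclidean metric on $\mathbb{R}$. A subset $A$ of a topological space is called compact if every collection of open sets whose union contains $A$ has a finite subcollection whose union contains $A$; compactness does not presuppose the Hausdorff property. *)

From HB Require Import structures.
From mathcomp Require Import all_boot all_order all_algebra.
From mathcomp Require Import all_classical all_reals all_analysis.
Set Implicit Arguments. Unset Strict Implicit. Unset Printing Implicit Defensive.
Import Order.TTheory GRing.Theory Num.Theory.
Import numFieldNormedType.Exports.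
Local Open Scope classical_set_scope.
Local Open Scope ring_scope.

(* Cantor's ternary set C = { sum_{n>=1} w_n / 3^n : w_n in {0,2} } as a
   subset of the reals R (digits indexed from 1, i.e. w k / 3^(k+1), k >= 0). *)
Definition cantor_ternary (R : realType) : set R :=
  [set x | exists w : nat -> R, (forall n, w n = 0 \/ w n = 2) /\
     (series (fun k => w k / 3 ^+ k.+1)) @ \oo --> x].
Arguments cantor_ternary R : clear implicits.

From HB Require Import structures.
From mathcomp Require Import all_boot all_order all_algebra.
From mathcomp Require Import all_classical all_reals all_analysis.
From mathcomp Require Import ring.
Set Implicit Arguments. Unset Strict Implicit. Unset Printing Implicit Defensive.
Import Order.TTheory GRing.Theory Num.Theory.
Import numFieldNormedType.Exports.
Local Open Scope classical_set_scope.
Local Open Scope ring_scope.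

(* The space is the grid N x N of isolated cells with two points at infinity:
   [inf_j] is the limit of every column (cell i j)_j, and [inf_i] is the limit of
   the cells as i grows, uniformly in j.  A neighbourhood of each point at
   infinity omits only finitely many cells, hence compactness.  Now let f map a
   compact metric space continuously onto the grid and let u k j be a preimage
   of cell k j.  A cluster point v k of (u k j)_j is mapped to [inf_j], hence so
   is a cluster point c of (v k)_k.  Some diagonal sequence u k (g k) also
   clusters at c, yet its image avoids the neighbourhood of [inf_j] made of the
   cells (i, j) with j > g i, contradicting continuity at c.  The Cantor set is
   such a space, being the image of the Cantor space under ternary expansion. *)

Lemma compact_cofinite_open (T : topologicalType) (p q : T) :
  (forall U V : set T, open U -> open V -> U p -> V q -> finite_set (~` (U `|` V))) ->
  compact [set: T].
Proof.
move=> cofin F FF _.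
have not_clusterP r : ~ cluster F r ->
    exists A U, [/\ F A, open U, U r & A `&` U = set0].
  rewrite clusterEonbhs => /existsNP[A /existsNP[U /not_implyP[FA /not_implyP[[oU Ur]]]]].
  by move=> /set0P/negP/negPn/eqP AU0; exists A, U.
have [Fp|/not_clusterP[A [U [FA oU Up AU0]]]] := pselect (cluster F p).
  by exists p.
have [Fq|/not_clusterP[B [V [FB oV Vq BV0]]]] := pselect (cluster F q).
  by exists q.
have FUV : F (~` (U `|` V)).
  apply: filterS (filterI FA FB) => x [Ax Bx] [Ux|Vx].
    by have : (A `&` U) x by []; rewrite AU0.
  by have : (B `&` V) x by []; rewrite BV0.
have [r [_ Fr]] := finite_compact (cofin U V oU oV Up Vq) FF FUV.
by exists r.
Qed.

Lemma cluster_seq_nbhs (T : topologicalType) (u : nat -> T) (c : T) (B : set T) N :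
  cluster (u @ \oo) c -> nbhs c B -> exists2 n, (N <= n)%N & B (u n).
Proof.
move=> cl Bc; have [_ [[n Nn <-] Bun]] := cl (u @` [set n | (N <= n)%N]) B
  (filterS (fun n Nn => ex_intro2 _ _ n Nn erefl) (nbhs_infty_ge N)) Bc.
by exists n.
Qed.

Lemma cluster_seq_open (T : topologicalType) (u : nat -> T) (c : T) (U : set T) N :
  cluster (u @ \oo) c -> open U -> U c -> exists2 n, (N <= n)%N & U (u n).
Proof. by move=> cl oU Uc; apply: cluster_seq_nbhs cl (open_nbhs_nbhs _). Qed.

Lemma compact_seq_cluster (T : topologicalType) (A : set T) (u : nat -> T) :
  compact A -> (forall n, A (u n)) -> exists2 c, A c & cluster (u @ \oo) c.
Proof.
move=> cA Au; have [|c [Ac clc]] := cA (u @ \oo) _.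
  by exists 0%N => // n _; exact: Au.
by exists c.
Qed.

Lemma cluster_within_continuous (S T : topologicalType) (A : set S) (f : S -> T)
    (u : nat -> S) (c : S) :
  {within A, continuous f} -> A c -> (forall n, A (u n)) ->
  cluster (u @ \oo) c -> cluster ((fun n => f (u n)) @ \oo) (f c).
Proof.
move=> /subspace_continuousP fc Ac Au cl P Q fuP Qfc.
have uP : (u @ \oo) (f @^-1` P) := fuP.
have uA : (u @ \oo) A by exists 0%N => // n _; exact: Au.
have Qc : nbhs c [set x | A x -> Q (f x)] := fc c Ac Q Qfc.
have [x [[Px Ax] /(_ Ax) Qx]] := cl _ _ (filterI uP uA) Qc.
by exists (f x).
Qed.

Lemma cluster_diagonal (R : archiRealFieldType) (M : pseudoMetricType R)
    (u : nat -> nat -> M) (v : nat -> M) (c : M) :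
  (forall k, cluster (u k @ \oo) (v k)) -> cluster (v @ \oo) c ->
  exists j : nat -> nat, cluster ((fun k => u k (j k)) @ \oo) c.
Proof.
move=> clu clv.
have /choice[j uj] : forall k, exists j, ball (v k) k.+1%:R^-1 (u k j).
  move=> k; have k0 : 0 < k.+1%:R^-1 :> R by rewrite invr_gt0.
  have [n _ ?] := cluster_seq_nbhs 0 (clu k) (nbhsx_ballx (v k) _ k0).
  by exists n.
exists j => P B [N _ PN] /nbhs_ballP[e e0 eB].
have e20 : 0 < e / 2 by rewrite divr_gt0.
have [K _ Ke] := near_infty_natSinv_lt (PosNum e20).
have [k + vk] := cluster_seq_nbhs (maxn N K) clv (nbhsx_ballx c _ e20).
rewrite geq_max => /andP[Nk Kk]; exists (u k (j k)); split; first exact: PN.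
apply: eB; rewrite [e]splitr; apply: ball_triangle vk (le_ball _ (uj k)).
exact/ltW/Ke.
Qed.

Definition grid := ((nat * nat) + bool)%type.
HB.instance Definition _ := Countable.on grid.

Notation cell i j := (inl (i, j) : grid).
Notation inf_i := (inr true : grid).
Notation inf_j := (inr false : grid).

Definition grid_open (U : set grid) : Prop :=
  (U inf_i -> exists n, forall i j, (n <= i)%N -> U (cell i j)) /\
  (U inf_j -> forall i, exists n, forall j, (n <= j)%N -> U (cell i j)).

Lemma grid_openT : grid_open setT.
Proof. by split=> _; [exists 0%N | move=> i; exists 0%N]. Qed.

Lemma grid_openI : setI_closed grid_open.
Proof.
move=> A B [A1 A2] [B1 B2]; split.
  move=> [/A1 [n An] /B1 [m Bm]]; exists (maxn n m) => i j.
  by rewrite geq_max => /andP[ni mi]; split; [apply: An | apply: Bm].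
move=> [/A2 An /B2 Bn] i; have [n {}An] := An i; have [m {}Bn] := Bn i.
exists (maxn n m) => j.
by rewrite geq_max => /andP[nj mj]; split; [apply: An | apply: Bn].
Qed.

Lemma grid_open_bigcup (I : Type) (U : I -> set grid) :
  (forall k, grid_open (U k)) -> grid_open (\bigcup_k U k).
Proof.
move=> oU; split=> -[k _ Uk].
  have [n Un] := (oU k).1 Uk.
  by exists n => i j ni; exists k => //; apply: Un.
move=> i; have [n Un] := (oU k).2 Uk i.
by exists n => j nj; exists k => //; apply: Un.
Qed.

HB.instance Definition _ :=
  isOpenTopological.Build grid grid_openT grid_openI grid_open_bigcup.

Lemma grid_cofinite_open (U V : set grid) :
  open U -> open V -> U inf_i -> V inf_j -> finite_set (~` (U `|` V)).
Proof.
move=> [oU _] [_ oV] Ui Vj; have [n Un] := oU Ui; have /choice[g Vg] := oV Vj.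
apply: (@sub_finite_set _ _ ((fun ij => cell ij.1 ij.2) @`
  ([set i | (i < n)%N] `*`` fun i => [set j | (j < g i)%N]))).
move=> [[i j]|[]] /not_orP[Uij Vij] //.
exists (i, j) => //; split; rewrite /= ltnNge; apply/negP.
  by move=> /(Un _ j).
by move=> /(Vg i).
apply: finite_image; apply: finite_setXR => [|i _]; exact: finite_II.
Qed.

Lemma grid_compact : compact [set: grid].
Proof. exact: compact_cofinite_open grid_cofinite_open. Qed.

Lemma grid_infinite : infinite_set [set: grid].
Proof.
move=> fin; apply: infinite_nat.
have cell0_inj : {in (fun i => cell i 0%N) @^-1` setT &, injective (fun i => cell i 0%N)}.
  by move=> i j _ _ [].
by have := finite_preimage cell0_inj fin; rewrite preimage_setT.
Qed.

Lemma open_cell i j : open [set cell i j].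
Proof. by split=> /= /eqP. Qed.

Lemma cluster_column k y : cluster ((fun j => cell k j) @ \oo) y -> y = inf_j.
Proof.
case: y => [[i j]|[]] cl //.
  have [n jn [_ nj]] := cluster_seq_open j.+1 cl (open_cell i j) erefl.
  by rewrite nj ltnn in jn.
pose U := [set y : grid | if y is inl (i, _) then (k < i)%N else y = inf_i].
have oU : open U by split=> // _; exists k.+1.
have [n _] := cluster_seq_open 0 cl oU erefl.
by rewrite /U /= ltnn.
Qed.

Lemma cluster_cst_inf_j y : cluster ((fun=> inf_j) @ \oo) y -> y = inf_j.
Proof.
case: y => [[i j]|[]] cl //; first by have [] := cluster_seq_open 0 cl (open_cell i j) erefl.
have oU : open [set~ inf_j] by split=> // _; exists 0%N.
have Ui : [set~ inf_j] inf_i by [].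
by have [n _ /(_ erefl)] := cluster_seq_open 0 cl oU Ui.
Qed.

Lemma not_cluster_graph (g : nat -> nat) :
  ~ cluster ((fun i => cell i (g i)) @ \oo) inf_j.
Proof.
pose U := [set y : grid | if y is inl (i, j) then (g i < j)%N else y = inf_j].
have oU : open U by split=> // _ i; exists (g i).+1.
move=> cl; have [n _] := cluster_seq_open 0 cl oU erefl.
by rewrite /U /= ltnn.
Qed.

Lemma grid_not_image_compact (R : archiRealFieldType) (M : pseudoMetricType R)
    (A : set M) (f : M -> grid) :
  compact A -> {within A, continuous f} -> f @` A <> [set: grid].
Proof.
move=> cA fC fA.
have /choice[pre preP] : forall y, exists x, A x /\ f x = y.
  move=> y; have [x Ax <-] : (f @` A) y by rewrite fA.
  by exists x.
pose u k j := pre (cell k j).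
have Au k j : A (u k j) by have [] := preP (cell k j).
have fu k j : f (u k j) = cell k j by have [] := preP (cell k j).
have /choice[v vP] : forall k, exists v, A v /\ cluster (u k @ \oo) v.
  by move=> k; have [v] := compact_seq_cluster cA (Au k); exists v.
have Av k : A (v k) by have [] := vP k.
have fv k : f (v k) = inf_j.
  have := cluster_within_continuous fC (Av k) (Au k) (vP k).2.
  by rewrite (funext (fu k)); exact: cluster_column.
have [c Ac clc] := compact_seq_cluster cA Av.
have fc : f c = inf_j.
  apply: cluster_cst_inf_j; rewrite -(funext fv).
  exact: cluster_within_continuous fC Ac Av clc.
have [j clj] := cluster_diagonal (fun k => (vP k).2) clc.
have := cluster_within_continuous fC Ac (fun k => Au k (j k)) clj.
by rewrite fc (funext (fun k => fu k (j k))); apply: not_cluster_graph.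
Qed.

Section ternary_expansion.
Variable R : realType.

Definition ternary_digit (b : cantor_space) k : R := if b k then 2 / 3 ^+ k.+1 else 0.

Lemma ternary_digit_ge0 b k : 0 <= ternary_digit b k.
Proof. by rewrite /ternary_digit; case: ifP. Qed.

Lemma sum_ternary_tail N n :
  \sum_(0 <= k < n) (if (N <= k)%N then 2 / 3 ^+ k.+1 else 0) =
  (3 ^+ N)^-1 - (3 ^+ maxn N n)^-1 :> R.
Proof.
elim: n => [|n IH]; first by rewrite big_geq // maxn0 subrr.
rewrite big_nat_recr //= IH; case: (leqP N n) => Nn; last first.
  by rewrite (maxn_idPl Nn) addr0.
rewrite (maxn_idPr (leqW Nn)) exprS.
by field; rewrite !expf_neq0.
Qed.

Lemma is_cvg_series_ternary_digit b : cvgn (series (ternary_digit b)).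
Proof.
apply: nondecreasing_is_cvgn.
  by apply/nondecreasing_seqP => n; rewrite seriesSr lerDl ternary_digit_ge0.
exists 1 => _ [n _ <-]; rewrite /series /=.
apply: (@le_trans _ _ (\sum_(0 <= k < n) (if (0 <= k)%N then 2 / 3 ^+ k.+1 else 0))).
  by apply: ler_sum => k _; rewrite /ternary_digit; case: ifP.
by rewrite (sum_ternary_tail 0 n) expr0 invr1 lerBlDr lerDl.
Qed.

Definition ternary (b : cantor_space) : R := limn (series (ternary_digit b)).

Lemma cvg_ternary b : series (ternary_digit b) @ \oo --> ternary b.
Proof. exact: is_cvg_series_ternary_digit. Qed.

Lemma ternary_dist_le b b' N : (forall k, (k < N)%N -> b' k = b k) ->
  `|ternary b - ternary b'| <= (3 ^+ N)^-1.
Proof.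
move=> agree.
have cvg_dist : `|series (ternary_digit b) n - series (ternary_digit b') n|
    @[n --> \oo] --> `|ternary b - ternary b'|.
  by apply: cvg_norm; apply: cvgB; exact: cvg_ternary.
rewrite -(cvg_lim _ cvg_dist) //; apply: limr_le; first exact: cvgP cvg_dist.
near=> n; rewrite /series /= -sumrB.
have tail_le : (3 ^+ N)^-1 - (3 ^+ maxn N n)^-1 <= (3 ^+ N)^-1 :> R.
  by rewrite lerBlDr lerDl.
apply: le_trans (ler_norm_sum _ _ _) (le_trans _ tail_le).
rewrite -sum_ternary_tail; apply: ler_sum => k _; rewrite /ternary_digit.
case: (leqP N k) => [_|/agree->]; last by rewrite subrr normr0.
by case: (b k); case: (b' k); rewrite ?subrr ?subr0 ?sub0r ?normrN ?normr0 ?ger0_norm.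
Unshelve. all: by end_near.
Qed.

Lemma nbhs_cantor_prefix (b : cantor_space) N :
  nbhs b [set b' : cantor_space | forall k, (k < N)%N -> b' k = b k].
Proof.
elim: N => [|N IH]; first exact: filterS filterT.
have bN : nbhs b [set b' : cantor_space | b' N = b N].
  exact: (@proj_continuous nat (fun=> bool) N b) (discrete_set1 (b N)).
apply: filterS (filterI IH bN) => b' [agree b'N] k.
by rewrite ltnS leq_eqVlt => /orP[/eqP->|/agree].
Qed.

Lemma exists_invX3_lt (e : R) : 0 < e -> exists N, (3 ^+ N)^-1 < e.
Proof.
move=> e0; exists (Num.bound e^-1).
have e_inv_ge0 : 0 <= e^-1 by rewrite invr_ge0 ltW.
have N_le_3X : (Num.bound e^-1)%:R <= 3 ^+ Num.bound e^-1 :> R.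
  by rewrite -natrX ler_nat ltnW // ltn_expl.
rewrite invf_plt ?posrE ?exprn_gt0 //.
exact: lt_le_trans (archi_boundP e_inv_ge0) N_le_3X.
Qed.

Lemma ternary_continuous : continuous ternary.
Proof.
move=> b; apply/cvgrPdist_lt => e e0; have [N Ne] := exists_invX3_lt e0.
apply: filterS (nbhs_cantor_prefix b N) => b' agree.
exact: le_lt_trans (ternary_dist_le agree) Ne.
Qed.

Lemma cantor_ternaryE : cantor_ternary R = range ternary.
Proof.
have digitE (b : cantor_space) :
    (fun k => (if b k then 2 else 0) / 3 ^+ k.+1) = ternary_digit b.
  by apply/funext => k; rewrite /ternary_digit; case: (b k); rewrite ?mul0r.
apply/seteqP; split => [x [w [w02 cvg_w]]|_ [b _ <-]].
  exists (fun k => w k == 2) => //; rewrite /ternary -digitE.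
  rewrite (_ : (fun k => _ / _) = (fun k => w k / 3 ^+ k.+1)); first exact: cvg_lim.
  apply/funext => k; case: (w02 k) => ->; rewrite ?eqxx //.
  by rewrite (negbTE (_ : (0 : R) != 2)) // eq_sym pnatr_eq0.
exists (fun k => if b k then 2 else 0); split; first by move=> k; case: (b k); [right|left].
by rewrite digitE; exact: cvg_ternary.
Qed.

Lemma cantor_ternary_compact : compact (cantor_ternary R).
Proof.
rewrite cantor_ternaryE; apply: continuous_compact cantor_space_compact.
exact/continuous_subspaceT/ternary_continuous.
Qed.

End ternary_expansion.

Theorem theorem1 (R : realType) :
  exists T : topologicalType,
    [/\ compact [set: T], countable [set: T], infinite_set [set: T] &
      ~ (exists f : R -> T,
           {within (cantor_ternary R), continuous f} /\
           f @` (cantor_ternary R) = [set: T])].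
Proof.
exists grid; split; [exact: grid_compact | exact: countableP | exact: grid_infinite |].
move=> [f [fC fA]].
exact: grid_not_image_compact (@cantor_ternary_compact R) fC fA.
Qed.
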